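(* Let $n\ge 1$, let $M\in \mathrm{Sp}(2n,\mathbb{F}_2)$ be the symplectic matrix of an $n$-qubit Clifford operator $U$, and let $0\le w\le n$. Then there exist vectors $u_1,\dots,u_{4w}\in\mathbb{F}_2^{2n}$ such that the matrix $$M' := M\, S_{u_1} S_{u_2}\cdots S_{u_{4w}}$$ (i.e. first apply $E_{u_1}$ to every row of $M$, then $E_{u_2}$, and so on) satisfies $e_iM'=e_i$ and $f_iM'=f_i$ for all $1\le i\le w$, and $bM'\in\mathrm{span}\{e_j,f_j : w<j\le n\}$ for every $b\in\{e_j,f_j: w<j\le n\}$. Equivalently, the Clifford operator $R_{\pi/4}(P_{u_{4w}})\cdots R_{\pi/4}(P_{u_1})$ composed with $U$ (in the order corresponding to $M'$) has, up to Pauli operators and phases, support only on the last $n-w$ qubits; i.e. $4w$ Pauli $\pi/4$ rotations suffice to clean a Clifford frame off $w$ qubits.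
   Context: Paulis and Cliffords are represented in the binary symplectic formalism. An $n$-qubit Pauli operator is identified (up to phase) with a row vector $v\in\mathbb{F}_2^{2n}$ via $P_v=\prod_{i=1}^n X_i^{v_i}Z_i^{v_{n+i}}$. The symplectic form is $\langle u,v\rangle=uJv^T$ with $J=\begin{bmatrix}0&I_n\\ I_n&0\end{bmatrix}$; $P_u,P_v$ commute iff $\langle u,v\rangle=0$. Let $e_1,\dots,e_{2n}$ be the standard basis of $\mathbb{F}_2^{2n}$ and $f_k:=e_{n+k}$ ($e_k$ corresponds to $X_k$, $f_k$ to $Z_k$). A Clifford $U$ is represented (ignoring Pauli corrections and phases) by a matrix $M_U$ with $M_UJM_U^T=J$, acting by $v\mapsto vM_U$ (conjugation $P\mapsto UPU^\dagger$); its $i$-th row is the image of the $i$-th basis vector. The Pauli $\pi/4$ rotation $R_{\pi/4}(P_u)$ maps $P\mapsto PP_u$ if $P$ anticommutes with $P_u$ and fixes $P$ otherwise; in symplectic form it acts as the transvection $E_u(v)=v+\langle u,v\rangle u$, whose matrix (row-vector convention $v\mapsto vS_u$) is denoted $S_u$. Each such rotation can be implemented by one logical Pauli product measurement with an ancilla. *)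

From mathcomp Require Import all_boot all_algebra.
Set Implicit Arguments. Unset Strict Implicit. Unset Printing Implicit Defensive.
Import GRing.Theory.
Local Open Scope ring_scope.

(* Coordinates of F_2^{2n} are indexed by 'I_(n + n): lshift n i is the
   X-coordinate of qubit i (vector e_{i+1}), rshift n i the Z-coordinate
   (vector f_{i+1}).  Qubits are 0-indexed here. *)

Definition F2 := 'F_2.

Definition Jmx (n : nat) : 'M[F2]_(n + n) := block_mx 0 1%:M 1%:M 0.

Definition symp (n : nat) (u v : 'rV[F2]_(n + n)) : F2 :=
  (u *m Jmx n *m v^T) 0 0.

Definition is_symp_mx (n : nat) (M : 'M[F2]_(n + n)) : Prop :=
  M *m Jmx n *m M^T = Jmx n.

Definition evec (n : nat) (i : 'I_n) : 'rV[F2]_(n + n) := delta_mx 0 (lshift n i).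
Definition fvec (n : nat) (i : 'I_n) : 'rV[F2]_(n + n) := delta_mx 0 (rshift n i).

Definition transvection (n : nat) (u v : 'rV[F2]_(n + n)) : 'rV[F2]_(n + n) :=
  v + symp u v *: u.

(* its matrix S_u in the row-vector convention: the k-th row is E_u of the
   k-th standard basis vector, so that v *m S_u = E_u v *)
Definition Smx (n : nat) (u : 'rV[F2]_(n + n)) : 'M[F2]_(n + n) :=
  \matrix_(k < n + n) transvection u (delta_mx 0 k).

Definition apply_rots (n : nat) (M : 'M[F2]_(n + n)) (us : seq 'rV[F2]_(n + n))
  : 'M[F2]_(n + n) := foldl (fun A u => A *m Smx u) M us.

(* span{e_j, f_j : w <= j < n} (0-indexed), as a matrix whose rows span it *)
Definition tail_span (n w : nat) : 'M[F2]_(n + n) :=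
  \matrix_(k < n + n)
    (if (w <= (if (k < n)%N then (k : nat) else (k - n)%N))%N then delta_mx 0 k
     else (0 : 'rV[F2]_(n + n))).

(* Suppose the current frame A
   is symplectic and already fixes e_k, f_k for k < i.  Then x = e_i A and
   y = f_i A are orthogonal to all e_k, f_k with k < i, and <x, y> = 1.  Two
   transvections E_u, with every u in that symplectic complement, move x to
   e_i: if <x, e_i> = 1 use u = x + e_i, otherwise choose z among f_i, y,
   y + f_i with <x, z> = <z, e_i> = 1 and use x + z, then z + e_i.  Two more,
   this time also orthogonal to e_i so that e_i stays put, move the image of
   f_i to f_i.  None of the four moves any e_k, f_k with k < i.  Once e_k, f_k
   are fixed for k < w, symplecticity forces every other basis vector into
   the symplectic complement of these, which is the span of the last n - w
   qubits. *)

From mathcomp Require Import all_boot all_algebra.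
Set Implicit Arguments. Unset Strict Implicit. Unset Printing Implicit Defensive.
Import GRing.Theory.
Local Open Scope ring_scope.

Lemma F2_addxx (a : F2) : a + a = 0.
Proof. by rewrite addrr_pchar2 // pchar_Fp. Qed.

Lemma F2_0or1 (a : F2) : a = 0 \/ a = 1.
Proof. by case: a => [[|[|m]] //= lt_m2]; [left | right]; apply: val_inj. Qed.

Lemma F2_addvv m (v : 'rV[F2]_m) : v + v = 0.
Proof. by apply/rowP => k; rewrite !mxE F2_addxx. Qed.

Section Symplectic.
Variable n : nat.
Implicit Types (A : 'M[F2]_(n + n)) (u v w x y z e f : 'rV[F2]_(n + n)).

Lemma trmx_Jmx : (Jmx n)^T = Jmx n.
Proof. by rewrite /Jmx tr_block_mx !trmx0 trmx1. Qed.

Lemma mulmx_Jmx v : v *m Jmx n = row_mx (rsubmx v) (lsubmx v).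
Proof. by rewrite -{1}(hsubmxK v) /Jmx mul_row_block !mulmx0 !mulmx1 add0r addr0. Qed.

Lemma sympC u v : symp u v = symp v u.
Proof.
have mx11_tr (B : 'M[F2]_1) : B 0 0 = B^T 0 0 by rewrite mxE.
by rewrite /symp mx11_tr !trmx_mul trmxK trmx_Jmx mulmxA.
Qed.

Lemma sympDl u v w : symp (u + v) w = symp u w + symp v w.
Proof. by rewrite /symp !mulmxDl mxE. Qed.

Lemma sympZl (a : F2) u w : symp (a *: u) w = a * symp u w.
Proof. by rewrite /symp -!scalemxAl mxE. Qed.

Lemma sympDr u v w : symp w (u + v) = symp w u + symp w v.
Proof. by rewrite !(sympC w) sympDl. Qed.

Lemma sympZr (a : F2) u w : symp w (a *: u) = a * symp w u.
Proof. by rewrite !(sympC w) sympZl. Qed.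

Lemma symp0l v : symp 0 v = 0.
Proof. by rewrite -(scale0r 0) sympZl mul0r. Qed.

Lemma symp_xx v : symp v v = 0.
Proof.
have mx11_tr (B : 'M[F2]_1) : B 0 0 = B^T 0 0 by rewrite mxE.
rewrite /symp mulmx_Jmx -{3}(hsubmxK v) tr_row_mx mul_row_col mxE.
by rewrite [X in _ + X]mx11_tr trmx_mul trmxK F2_addxx.
Qed.

Lemma symp_delta v k : symp v (delta_mx 0 k) = (v *m Jmx n) 0 k.
Proof. by rewrite /symp trmx_delta -colE mxE. Qed.

Lemma symp_evec v (i : 'I_n) : symp v (evec i) = v 0 (rshift n i).
Proof. by rewrite symp_delta mulmx_Jmx row_mxEl mxE. Qed.

Lemma symp_fvec v (i : 'I_n) : symp v (fvec i) = v 0 (lshift n i).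
Proof. by rewrite symp_delta mulmx_Jmx row_mxEr mxE. Qed.

Lemma symp_evec_evec (i j : 'I_n) : symp (evec i) (evec j) = 0.
Proof. by rewrite symp_evec mxE eq_sym eq_lrshift andbF. Qed.

Lemma symp_fvec_fvec (i j : 'I_n) : symp (fvec i) (fvec j) = 0.
Proof. by rewrite symp_fvec mxE eq_lrshift andbF. Qed.

Lemma symp_evec_fvec (i j : 'I_n) : symp (evec i) (fvec j) = (i == j)%:R.
Proof. by rewrite symp_fvec mxE eq_shift eq_sym. Qed.

Lemma symp_fvec_evec (i j : 'I_n) : symp (fvec i) (evec j) = (i == j)%:R.
Proof. by rewrite sympC symp_evec_fvec eq_sym. Qed.

Lemma mul_Smx v u : v *m Smx u = transvection u v.
Proof.
have mulJ w : w *m Jmx n *m u^T *m u = symp w u *: u.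
  by rewrite {1}[w *m _ *m _]mx11_scalar mul_scalar_mx.
have -> : Smx u = 1%:M + Jmx n *m u^T *m u.
  apply/row_matrixP => k.
  by rewrite rowK /transvection rowE mulmxDr mulmx1 !mulmxA mulJ sympC.
by rewrite mulmxDr mulmx1 !mulmxA mulJ /transvection sympC.
Qed.

Lemma transvection_id u v : symp u v = 0 -> transvection u v = v.
Proof. by move=> uv0; rewrite /transvection uv0 scale0r addr0. Qed.

Lemma transvection0 v : transvection 0 v = v.
Proof. by rewrite transvection_id ?symp0l. Qed.

Lemma transvection_swap x z : symp x z = 1 -> transvection (x + z) x = z.
Proof.
move=> xz1; rewrite /transvection sympDl symp_xx add0r sympC xz1 scale1r.
by rewrite addrA F2_addvv add0r.
Qed.

Lemma symp_transvection u v w :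
  symp (transvection u v) (transvection u w) = symp v w.
Proof.
rewrite /transvection (sympC u v) (sympC u w).
rewrite !sympDl !sympDr !sympZl !sympZr symp_xx !mulr0 addr0 sympC.
by rewrite (sympC u w) -addrA (mulrC (symp v u)) F2_addxx addr0.
Qed.

Section TwoTransvections.
Variable P : 'rV[F2]_(n + n) -> Prop.
Hypothesis PD : forall u v, P u -> P v -> P (u + v).

Lemma transvections_move x y e f :
    symp x y = 1 -> symp e f = 1 -> P x -> P y -> P e -> P f ->
  exists u1 u2, [/\ P u1, P u2 & transvection u2 (transvection u1 x) = e].
Proof.
move=> xy1 ef1 Px Py Pe Pf.
have P0 : P 0 by rewrite -(F2_addvv x); apply: PD.
have fe1 : symp f e = 1 by rewrite sympC.
have via z : P z -> symp x z = 1 -> symp z e = 1 ->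
    exists u1 u2, [/\ P u1, P u2 & transvection u2 (transvection u1 x) = e].
  move=> Pz xz1 ze1; exists (x + z), (z + e).
  by split; [apply: PD | apply: PD | rewrite !transvection_swap].
have [xe0|xe1] := F2_0or1 (symp x e); last first.
  by exists (x + e), 0; split; [apply: PD | | rewrite transvection0 transvection_swap].
have [xf0|xf1] := F2_0or1 (symp x f); last exact: via f Pf xf1 fe1.
have [ye0|ye1] := F2_0or1 (symp y e); last exact: via y Py xy1 ye1.
apply: (via (y + f)); first exact: PD.
  by rewrite sympDr xy1 xf0 addr0.
by rewrite sympDl ye0 fe1 add0r.
Qed.

Lemma transvections_move_fixing e y f :
    symp e y = 1 -> symp e f = 1 -> P e -> P y -> P f ->
  exists u1 u2, [/\ P u1, P u2, symp u1 e = 0, symp u2 e = 0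
                  & transvection u2 (transvection u1 y) = f].
Proof.
move=> ey1 ef1 Pe Py Pf.
have ye1 : symp y e = 1 by rewrite sympC.
have fe1 : symp f e = 1 by rewrite sympC.
have [yf0|yf1] := F2_0or1 (symp y f).
  exists (y + (e + f)), e; split=> //.
  - by apply: PD => //; apply: PD.
  - by rewrite !sympDl ye1 symp_xx fe1 add0r F2_addxx.
  - exact: symp_xx.
  rewrite transvection_swap; last by rewrite sympDr ye1 yf0 addr0.
  by rewrite /transvection sympDr symp_xx ef1 add0r scale1r addrC addrA F2_addvv add0r.
exists (y + f), 0; split.
- exact: PD.
- by rewrite -(F2_addvv e); apply: PD.
- by rewrite sympDl ye1 fe1 F2_addxx.
- exact: symp0l.
- by rewrite transvection0 transvection_swap.
Qed.

End TwoTransvections.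

Definition symp_preserving A := forall v w, symp (v *m A) (w *m A) = symp v w.

Definition fixes_first A i := forall k : 'I_n, (k < i)%N ->
  evec k *m A = evec k /\ fvec k *m A = fvec k.

Definition orth_first i v := forall k : 'I_n, (k < i)%N ->
  symp v (evec k) = 0 /\ symp v (fvec k) = 0.

Lemma is_symp_mx_preserving A : is_symp_mx A -> symp_preserving A.
Proof.
move=> symA v w; rewrite /symp trmx_mul !mulmxA -(mulmxA v A) -(mulmxA v (A *m Jmx n)).
by rewrite symA.
Qed.

Lemma orth_firstD i u v : orth_first i u -> orth_first i v -> orth_first i (u + v).
Proof.
move=> ou ov k lt_ki; have [ue uf] := ou k lt_ki; have [ve vf] := ov k lt_ki.
by rewrite !sympDl ue uf ve vf addr0.
Qed.

Lemma orth_first_evec i (j : 'I_n) : (i <= j)%N -> orth_first i (evec j).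
Proof.
move=> le_ij k lt_ki; rewrite symp_evec_evec symp_evec_fvec.
by have /negbTE -> : j != k by rewrite neq_ltn (leq_trans lt_ki le_ij) orbT.
Qed.

Lemma orth_first_fvec i (j : 'I_n) : (i <= j)%N -> orth_first i (fvec j).
Proof.
move=> le_ij k lt_ki; rewrite symp_fvec_fvec symp_fvec_evec.
by have /negbTE -> : j != k by rewrite neq_ltn (leq_trans lt_ki le_ij) orbT.
Qed.

Lemma orth_first_mulmx A i v :
  symp_preserving A -> fixes_first A i -> orth_first i v -> orth_first i (v *m A).
Proof.
move=> pA fA ov k lt_ki; have [eA fA'] := fA k lt_ki.
by rewrite -eA -fA' !pA; apply: ov.
Qed.

Lemma mul_apply_rots v A us :
  v *m apply_rots A us = foldl (fun v u => transvection u v) (v *m A) us.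
Proof. by elim: us A => //= u us IH A; rewrite IH mulmxA mul_Smx. Qed.

Lemma apply_rots_cat A us vs :
  apply_rots A (us ++ vs) = apply_rots (apply_rots A us) vs.
Proof. exact: foldl_cat. Qed.

Lemma apply_rots_preserving A us :
  symp_preserving A -> symp_preserving (apply_rots A us).
Proof.
elim: us A => //= u us IH A pA; apply: IH => v w.
by rewrite !mulmxA !mul_Smx symp_transvection.
Qed.

Lemma apply_rots_fixes A i us : (forall u, u \in us -> orth_first i u) ->
  fixes_first A i -> fixes_first (apply_rots A us) i.
Proof.
elim: us A => //= u us IH A ous fA; apply: IH => [v vus|k lt_ki].
  by apply: ous; rewrite inE vus orbT.
have [ue uf] := ous u (mem_head u us) k lt_ki; have [eA fA'] := fA k lt_ki.
by rewrite !mulmxA eA fA' !mul_Smx !transvection_id // sympC.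
Qed.

Lemma clean_qubit A (i : 'I_n) : symp_preserving A -> fixes_first A i ->
  exists us, size us = 4%N /\ fixes_first (apply_rots A us) i.+1.
Proof.
move=> pA fA; set e := evec i; set f := fvec i.
have oev : orth_first i e := orth_first_evec (leqnn i).
have ofv : orth_first i f := orth_first_fvec (leqnn i).
have ef1 : symp e f = 1 by rewrite symp_evec_fvec eqxx.
have [u1 [u2 [o1 o2 moved_e]]] :=
  transvections_move (@orth_firstD i) (x := e *m A) (y := f *m A)
    (etrans (pA e f) ef1) ef1
    (orth_first_mulmx pA fA oev) (orth_first_mulmx pA fA ofv) oev ofv.
set B := apply_rots A [:: u1; u2].
have eB : e *m B = e by rewrite mul_apply_rots.
have pB : symp_preserving B := apply_rots_preserving _ pA.
have fB : fixes_first B i.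
  by apply: apply_rots_fixes fA => u; rewrite !inE => /orP[]/eqP->.
have eBf1 : symp e (f *m B) = 1 by rewrite -{1}eB pB.
have [u3 [u4 [o3 o4 u3e0 u4e0 moved_f]]] :=
  transvections_move_fixing (@orth_firstD i) eBf1 ef1
    oev (orth_first_mulmx pB fB ofv) ofv.
exists [:: u1; u2; u3; u4]; split=> //.
rewrite (apply_rots_cat A [:: u1; u2] [:: u3; u4]) -/B.
move=> k; rewrite ltnS leq_eqVlt => /orP[/eqP/val_inj-> | lt_ki].
  by rewrite !(mul_apply_rots _ B) /= eB moved_f !transvection_id.
by apply: apply_rots_fixes lt_ki => // u; rewrite !inE => /orP[]/eqP->.
Qed.

Lemma clean_first_qubits A (w : nat) : (w <= n)%N -> symp_preserving A ->
  exists us, size us = (4 * w)%N /\ fixes_first (apply_rots A us) w.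
Proof.
elim: w => [|w IH] lt_wn pA; first by exists [::].
have [us [size_us fus]] := IH (ltnW lt_wn) pA.
have [vs [size_vs fvs]] :=
  clean_qubit (i := Ordinal lt_wn) (apply_rots_preserving us pA) fus.
exists (us ++ vs); rewrite apply_rots_cat size_cat size_us size_vs mulnSr.
by split.
Qed.

Lemma orth_first_sub_tail_span (w : nat) v :
  orth_first w v -> (v <= tail_span n w)%MS.
Proof.
move=> ov; rewrite [v]row_sum_delta; apply: summx_sub => k _.
have [le_wk | lt_kw] := boolP (w <= (if (k < n)%N then (k : nat) else (k - n)%N))%N.
  by apply/scalemx_sub/(eq_row_sub k); rewrite rowK le_wk.
suff -> : v 0 k = 0 by rewrite scale0r sub0mx.
rewrite -ltnNge in lt_kw.
case: split_ordP lt_kw => j -> /=.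
  by rewrite -symp_fvec => /ov[].
by rewrite addKn -symp_evec => /ov[].
Qed.

End Symplectic.

Theorem lemmaA1 (n : nat) (hn : (1 <= n)%N) (M : 'M[F2]_(n + n))
  (hM : is_symp_mx M) (w : nat) (hw : (w <= n)%N) :
  exists us : seq 'rV[F2]_(n + n),
    size us = (4 * w)%N /\
    let M' := apply_rots M us in
    (forall i : 'I_n, (i < w)%N ->
       evec i *m M' = evec i /\ fvec i *m M' = fvec i) /\
    (forall j : 'I_n, (w <= j)%N ->
       (evec j *m M' <= tail_span n w)%MS /\ (fvec j *m M' <= tail_span n w)%MS).
Proof.
have pM := is_symp_mx_preserving hM.
have [us [size_us fixed]] := clean_first_qubits hw pM.
exists us; split=> //; split=> // j le_wj.
have pM' := apply_rots_preserving us pM.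
by split; apply/orth_first_sub_tail_span/orth_first_mulmx => //;
  [apply: orth_first_evec | apply: orth_first_fvec].
Qed.
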